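(* If a finite semigroup $S$ is pseudo-nilpotent and its upper non-nilpotent graph $\mathcal{N}_S$ has no edges, then $S$ is nilpotent.
   Context: For a semigroup $S$, $S^1$ denotes $S$ with an identity adjoined (if $S$ has none). For $x,y\in S$ and $z_1,z_2,\ldots\in S^1$ define recursively $\lambda_0=x$, $\rho_0=y$, $\lambda_{n+1}=\lambda_n z_{n+1}\rho_n$, $\rho_{n+1}=\rho_n z_{n+1}\lambda_n$; write $\lambda_n(x,y,z_1,\ldots,z_n)$ and $\rho_n(x,y,z_1,\ldots,z_n)$. A semigroup $S$ is nilpotent (in the sense of Mal'cev) if there is a positive integer $n$ with $\lambda_n(a,b,c_1,\ldots,c_n)=\rho_n(a,b,c_1,\ldots,c_n)$ for all $a,b\in S$ and $c_1,\ldots,c_n\in S^1$. $\langle X\rangle$ denotes the subsemigroup generated by $X$. The upper non-nilpotent graph $\mathcal{N}_S$ has vertex set $S$, with an edge between $x$ and $y$ iff $\langle x,y\rangle$ is not nilpotent; ''$\mathcal{N}_S$ is empty'' means it has no edges. The empty set is regarded as an ideal; for an ideal $I$ of $S$, $S/I$ is the Rees factor semigroup, with $S/\emptyset=S$. A semigroup $S$ is pseudo-nilpotent if the following holds: whenever $x,y\in S$, $w_1,\ldots,w_m\in S^1$, $T$ is the subsemigroup generated by $x,y$ and those $w_i$ lying in $S$, $I$ is an ideal (possibly empty) of $T$, and $t<m$ are non-negative integers such that, writing $\lambda_k=\lambda_k(x,y,w_1,\ldots,w_k)$ and $\rho_k=\rho_k(x,y,w_1,\ldots,w_k)$, one has $\lambda_t\neq\rho_t$,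 $(\lambda_t,\rho_t)=(\lambda_m,\rho_m)$ and $\lambda_m,\rho_m\notin I$, then for every $0\le i\le m$ there is an edge in $\mathcal{N}_{T/I}$ between (the images of) $\lambda_i$ and $\rho_i$. *)

From mathcomp Require Import all_boot.
Set Implicit Arguments. Unset Strict Implicit. Unset Printing Implicit Defensive.

Section Semigroup.
Variables (U : finType) (mul : U -> U -> U).

(* multiplication by an element of S^1 : None is the adjoined identity *)
Definition mul1 (x : U) (z : option U) (y : U) : U :=
  match z with None => mul x y | Some z => mul (mul x z) y end.

(* lam_rho x y [:: z_1; ...; z_n] = (lambda_n, rho_n)(x, y, z_1, ..., z_n) *)
Fixpoint lam_rho (x y : U) (zs : seq (option U)) : U * U :=
  match zs with
  | [::] => (x, y)
  | z :: zs' => lam_rho (mul1 x z y) (mul1 y z x) zs'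
  end.

Definition lam (x y : U) zs := (lam_rho x y zs).1.
Definition rho (x y : U) zs := (lam_rho x y zs).2.

Definition mul_closed (B : {set U}) : bool :=
  [forall a in B, forall b in B, mul a b \in B].

Definition gen (X : {set U}) : {set U} :=
  [set u | [forall B : {set U}, ((X \subset B) && mul_closed B) ==> (u \in B)]].

(* the subsemigroup A (a set closed under mul) is nilpotent (Mal'cev);
   the c_i range over A^1, None being the adjoined identity *)
Definition nilpotent_in (A : {set U}) : Prop :=
  exists n : nat, 0 < n /\
    forall a b, a \in A -> b \in A ->
    forall c : seq (option U), size c = n ->
      (forall z, Some z \in c -> z \in A) ->
      lam a b c = rho a b c.

Definition nn_edge (x y : U) : Prop := ~ nilpotent_in (gen [set x; y]).

(* I is an ideal (possibly empty) of the subsemigroup A *)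
Definition is_ideal_of (A I : {set U}) : Prop :=
  I \subset A /\ forall a b, a \in I -> b \in A -> mul a b \in I /\ mul b a \in I.

End Semigroup.

Section Rees.
Variables (T : finType) (mul : T -> T -> T) (I : {set T}).

(* Rees factor multiplication on option T, None playing the role of the zero
   (the class of I); the Rees factor A/I of a subsemigroup A is carried by
   [set Some t | t in A :\: I] together with None when I is nonempty.
   When I is empty None never arises, so A/I = A. *)
Definition rees_mul (u v : option T) : option T :=
  match u, v with
  | Some a, Some b => if mul a b \in I then None else Some (mul a b)
  | _, _ => None
  end.

Definition rees_img (t : T) : option T := if t \in I then None else Some t.

End Rees.

Definition pseudo_nilpotent (T : finType) (mul : T -> T -> T) : Prop :=
  forall (x y : T) (w : seq (option T)) (I : {set T}) (t : nat),
    let m := size w in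
    let Tg := gen mul ([set x; y] :|: [set s | Some s \in w]) in
    is_ideal_of mul Tg I ->
    t < m ->
    lam mul x y (take t w) != rho mul x y (take t w) ->
    (lam mul x y (take t w), rho mul x y (take t w)) = (lam mul x y w, rho mul x y w) ->
    lam mul x y w \notin I -> rho mul x y w \notin I ->
    forall i, i <= m ->
      nn_edge (rees_mul mul I)
        (rees_img I (lam mul x y (take i w))) (rees_img I (rho mul x y (take i w))).

From mathcomp Require Import all_boot.
Set Implicit Arguments. Unset Strict Implicit. Unset Printing Implicit Defensive.

(* Along any sequence c of length #|T * T| + 1 the pairs (lambda_i, rho_i)
   must repeat, say at i < j.  If lambda_n <> rho_n then lambda_i <> rho_i
   (equal pairs stay equal), so pseudo-nilpotency applied to the prefix of
   length j and the empty ideal yields an edge between lambda_0 = a and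
   rho_0 = b in the upper non-nilpotent graph of S/{} = S, which is empty. *)

Lemma pigeonhole_nat (aT : finType) (f : nat -> aT) :
  exists i j, i < j <= #|aT| /\ f i = f j.
Proof.
have /injectivePn [i [j neq_ij fij]] : ~~ injectiveb (fun k : 'I_#|aT|.+1 => f k).
  by apply/negP=> /injectiveP /leq_card; rewrite card_ord ltnn.
have [lt_ij | lt_ji | eq_ij] := ltngtP i j.
- by exists i, j; rewrite lt_ij -ltnS ltn_ord.
- by exists j, i; rewrite lt_ji -ltnS ltn_ord.
- by move: neq_ij; rewrite -val_eqE /= eq_ij eqxx.
Qed.

Section LamRho.
Variables (T : finType) (mul : T -> T -> T).

Lemma lam_rho_cat x y zs zs' :
  lam_rho mul x y (zs ++ zs') =
  lam_rho mul (lam_rho mul x y zs).1 (lam_rho mul x y zs).2 zs'.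
Proof. by elim: zs x y => [|z zs IH] x y //=. Qed.

Lemma lam_rho_diag x zs : (lam_rho mul x x zs).1 = (lam_rho mul x x zs).2.
Proof. by elim: zs x => [|z zs IH] x //=. Qed.

Lemma lam_neq_rho_take x y zs i :
  lam mul x y zs != rho mul x y zs ->
  lam mul x y (take i zs) != rho mul x y (take i zs).
Proof.
apply: contra; rewrite /lam /rho -[in X in _ -> X](cat_take_drop i zs) lam_rho_cat.
by case: (lam_rho mul x y (take i zs)) => l r /= /eqP ->; rewrite lam_rho_diag.
Qed.

End LamRho.

Section Generation.
Variables (T : finType) (mul : T -> T -> T).

Lemma mul_closedP (B : {set T}) :
  reflect (forall a b, a \in B -> b \in B -> mul a b \in B) (mul_closed mul B).
Proof.
apply: (iffP forallP) => [clB a b aB bB | clB a].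
  by move/implyP: (clB a) => /(_ aB) /forallP /(_ b) /implyP; apply.
by apply/implyP=> aB; apply/forallP=> b; apply/implyP; apply: clB.
Qed.

Lemma gen_min (X B : {set T}) :
  X \subset B -> mul_closed mul B -> gen mul X \subset B.
Proof.
move=> XB clB; apply/subsetP=> u; rewrite inE => /forallP /(_ B).
by rewrite XB clB => /implyP; apply.
Qed.

Lemma subset_gen (X : {set T}) : X \subset gen mul X.
Proof.
apply/subsetP=> u uX; rewrite inE; apply/forallP=> B.
by apply/implyP=> /andP[/subsetP XB _]; apply: XB.
Qed.

Lemma mul_closed_gen (X : {set T}) : mul_closed mul (gen mul X).
Proof.
apply/mul_closedP=> a b; rewrite !inE => /forallP aB /forallP bB.
apply/forallP=> B; apply/implyP=> XclB; have /andP[_ /mul_closedP clB] := XclB.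
by apply: clB; [move/implyP: (aB B) | move/implyP: (bB B)]; apply.
Qed.

End Generation.

Section ReesByEmptyIdeal.
Variables (T : finType) (mul : T -> T -> T).

Local Notation mul0 := (rees_mul mul set0).

Lemma is_ideal_of_set0 (A : {set T}) : is_ideal_of mul A set0.
Proof. by split=> [|u v]; [exact: sub0set | rewrite in_set0]. Qed.

Lemma rees0_mul_some a b : mul0 (Some a) (Some b) = Some (mul a b).
Proof. by rewrite /rees_mul in_set0. Qed.

Lemma rees0_lam_rho a b zs :
  lam_rho mul0 (Some a) (Some b) (map (omap Some) zs) =
  (Some (lam_rho mul a b zs).1, Some (lam_rho mul a b zs).2).
Proof.
by elim: zs a b => [|[z|] zs IH] a b //=; rewrite !in_set0 /= ?in_set0.
Qed.

Lemma nilpotent_in_rees0 (A : {set T}) (A' : {set option T}) :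
  A' \subset Some @: A -> nilpotent_in mul A -> nilpotent_in mul0 A'.
Proof.
move=> /subsetP sA'A [n [n_gt0 nilA]]; exists n; split=> // a' b' aA' bA' c sz_c cA'.
have [a aA ->] := imsetP (sA'A _ aA'); have [b bA ->] := imsetP (sA'A _ bA').
have inA z : Some z \in c -> exists2 t, t \in A & z = Some t.
  by move=> /cA' /sA'A /imsetP.
have -> : c = map (omap Some) (map (obind id) c).
  rewrite -map_comp -[LHS]map_id; apply/eq_in_map => -[z /inA [t _ ->] | ] //.
rewrite /lam /rho rees0_lam_rho; congr Some; apply: nilA => //.
  by rewrite !size_map.
by move=> z /mapP [[x /inA [t tA ->] [->] | _ //]].
Qed.

Lemma nn_edge_rees0 x y : nn_edge mul0 (Some x) (Some y) -> nn_edge mul x y.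
Proof.
move=> edge0 nil_xy; apply/edge0/(nilpotent_in_rees0 _ nil_xy).
apply: gen_min.
  apply/subsetP=> u; rewrite !inE => /orP [] /eqP ->; apply: imset_f;
  by apply: (subsetP (subset_gen _ _)); rewrite !inE eqxx ?orbT.
apply/mul_closedP=> _ _ /imsetP [u uG ->] /imsetP [v vG ->].
by rewrite rees0_mul_some imset_f //; apply/mul_closedP => //; apply: mul_closed_gen.
Qed.

End ReesByEmptyIdeal.

Lemma pseudo_nilpotent_repeat_edge (T : finType) (mul : T -> T -> T)
    (x y : T) (w : seq (option T)) (i : nat) :
  pseudo_nilpotent mul -> i < size w ->
  lam mul x y w != rho mul x y w ->
  lam_rho mul x y (take i w) = lam_rho mul x y w ->
  nn_edge mul x y.
Proof.
move=> pnil lt_iw neq_w eq_iw; apply: nn_edge_rees0.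
have := pnil x y w set0 i (is_ideal_of_set0 _ _) lt_iw (lam_neq_rho_take i neq_w).
rewrite /lam /rho eq_iw => /(_ erefl _ _ 0 isT).
by rewrite take0 /rees_img !in_set0; apply.
Qed.

Theorem lemma2p4 (T : finType) (mul : T -> T -> T) :
  associative mul ->
  pseudo_nilpotent mul ->
  (forall x y : T, ~ nn_edge mul x y) ->
  nilpotent_in mul [set: T].
Proof.
move=> _ pnil no_edge; exists #|{: T * T}|.+1; split=> // a b _ _ c sz_c _.
apply/eqP; apply: contraT => neq_c.
have [i [j [/andP [lt_ij le_j] eq_ij]]] :=
  pigeonhole_nat (fun k => lam_rho mul a b (take k c)).
have le_jc : j <= size c by rewrite sz_c ltnW.
case: (no_edge a b (pseudo_nilpotent_repeat_edge (i := i) pnil _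
          (lam_neq_rho_take j neq_c) _)).
  by rewrite size_takel.
by rewrite take_takel ?(ltnW lt_ij).
Qed.
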